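(* The regret of the FO-UCB with $g(k, \delta)$-bounded first-order algorithm for the MAB problem with $K$ arms, auxiliary functions $f_i(x) = \frac{1}{2}(x-\mu_i)^2$, period $T$, $\delta=\frac{1}{T^2}$ satisfies \[ R_T \leq \sum_{i: \Delta_i>0} \Delta_i \left (g^{-1}\left (\frac{\Delta_i^2}{8}, \frac{1}{T^2} \right ) + 2 \right ). \]
   Context: Stochastic multi-armed bandit with $K$ arms and $T$ rounds; arm $i$ has reward distribution $\mathcal{D}_i$ with mean $\mu_i$; rewards are drawn independently each time an arm is played. $i^* = \arg\max_i \mu_i$, $\Delta_i = \mu_{i^*} - \mu_i$, and the regret is $R_T = T\max_i \mu_i - \sum_{t=1}^T \mathbb{E}[\mu_{A_t}]$, where $A_t$ is the arm played in round $t$. For minimizing $f:\mathbb{R}\to\mathbb{R}$ with minimizer $x^*$ through a stochastic first-order oracle $\mathcal{G}$, an algorithm $x_{k+1} = \mathcal{A}(x_0, \mathcal{G}(x_0), \dots, x_k, \mathcal{G}(x_k))$ is a $g(k,\delta)$-bounded (bounding) first-order algorithm if for every $k\in\mathbb{N}$ and $\delta>0$, $f(x_k) - f(x^* ) \le g(k,\delta)$ with probability at least $1-\delta$. $g^{-1}(\cdot,\delta)$ denotes the inverse in the first argument: $g(g^{-1}(x,\delta),\delta) = x$. FO-UCB: for each arm $i$ take $f_i(x) = \frac12(x-\mu_i)^2$ with stochastic gradient oracle $\nabla f_i(x,\xi) = x - \xi$, $\xi\sim\mathcal{D}_i$ (a pulled reward of arm $i$); run the $g(k,\delta)$-bounded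 algorithm $\mathcal{A}$ on each arm's samples, producing iterates $x_i^k$; with $n_i(t) = \sum_{s=1}^t \mathbb{1}\{A_s = i\}$, the index is $UCB(i, n_i(t), \delta) = x_i^{n_i(t)} + \sqrt{2 g(n_i(t), \delta)}$, and each round the arm with the largest index is played. *)

From mathcomp Require Import all_boot all_order all_algebra.
From mathcomp Require Import all_classical all_reals all_analysis.
Set Implicit Arguments. Unset Strict Implicit. Unset Printing Implicit Defensive.
Import Order.TTheory GRing.Theory Num.Theory.
Local Open Scope classical_set_scope.
Local Open Scope ring_scope.

Section FOUCB.
Variable R : realType.

Definition aux_f (mu x : R) : R := 2^-1 * (x - mu) ^+ 2.

Definition sgrad (x xi : R) : R := x - xi.

(* A deterministic first-order algorithm is a map from the history
   [(x_0, G(x_0)); ...; (x_k, G(x_k))] to the next iterate x_{k+1};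
   x0 is the initial point.  The j-th oracle call (at x_j) uses the sample
   xi j.  [fo_hist A x0 xi k] is the history of the first k queries. *)
Fixpoint fo_hist (A : seq (R * R) -> R) (x0 : R) (xi : nat -> R) (k : nat)
  : seq (R * R) :=
  match k with
  | 0 => [::]
  | k'.+1 =>
      let h := fo_hist A x0 xi k' in
      let xk := if k' is 0 then x0 else A h in
      rcons h (xk, sgrad xk (xi k'))
  end.

Definition fo_iter (A : seq (R * R) -> R) (x0 : R) (xi : nat -> R) (k : nat) : R :=
  if k is 0 then x0 else A (fo_hist A x0 xi k).

Definition fo_bounded d (Omega : measurableType d) (P : probability Omega R)
  (A : seq (R * R) -> R) (x0 : R) (xi_seq : nat -> Omega -> R)
  (f : R -> R) (xstar : R) (g : R -> R -> R) : Prop :=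
  forall (k : nat) (delta : R), 0 < delta ->
    ((1 - delta)%:E <=
     P [set w | (f (fo_iter A x0 (fun j => xi_seq j w) k) - f xstar <= g k%:R delta)%R])%E.

Definition mutually_independent d (Omega : measurableType d)
  (P : probability Omega R) (I : eqType) (Y : I -> Omega -> R) : Prop :=
  forall (J : seq I) (B : I -> set R), uniq J ->
    (forall j, j \in J -> measurable (B j)) ->
    P (\big[setI/setT]_(j <- J) (Y j @^-1` B j)) =
    (\prod_(j <- J) P (Y j @^-1` B j))%E.

Definition pulls (K : nat) (pick : nat -> 'I_K) (i : 'I_K) (t : nat) : nat :=
  count (fun s => pick s == i) (iota 0 t).

Definition ucb_index (A : seq (R * R) -> R) (x0 : R) (g : R -> R -> R)
  (delta : R) (xi : nat -> R) (n : nat) : R :=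
  fo_iter A x0 xi n + Num.sqrt (2 * g n%:R delta).

End FOUCB.

From mathcomp Require Import all_boot all_order all_algebra.
From mathcomp Require Import all_classical all_reals all_analysis.
From mathcomp Require Import measurable_realfun lra zify.
Import Order.TTheory GRing.Theory Num.Theory.
Local Open Scope classical_set_scope.
Local Open Scope ring_scope.

(* Fix a suboptimal arm i and let l_i = g^-1(Delta_i^2/8, delta).  Since
   f_i(x) - f_i(mu_i) = (x - mu_i)^2/2, whenever the guarantee of the
   first-order algorithm holds after n samples of arm i, its index lies in
   [mu_i, mu_i + 2 sqrt(2 g(n, delta))], which is below mu_i* as soon as
   n > l_i; likewise the index of the optimal arm is at least mu_i* whenever
   its guarantee holds.  So on every sample path each pull of arm i beyond the
   first l_i + 1 is charged to a failed guarantee: of arm i at its current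
   count, or of arm i* at some count below the current round.  Each failure
   has probability at most delta = 1/T^2, hence
   E[pulls of i] <= l_i + 1 + (T + T(T-1)/2) delta <= l_i + 2, and the regret
   is the sum of Delta_i E[pulls of i]. *)

Lemma ler_sum_ord_widen {R : numDomainType} {F : nat -> R} {m n} :
  (forall k, 0 <= F k) -> (m <= n)%N -> \sum_(k < m) F k <= \sum_(k < n) F k.
Proof.
move=> F0 mn; rewrite (big_ord_widen n F mn).
by rewrite [leRHS](bigID (fun k : 'I_n => (k < m)%N)) /= lerDl sumr_ge0.
Qed.

Lemma ler_sum_ord_term {R : numDomainType} {F : nat -> R} {a n} :
  (forall k, 0 <= F k) -> (a < n)%N -> F a <= \sum_(k < n) F k.
Proof.
by move=> F0 an; rewrite (bigD1 (Ordinal an)) //= lerDl sumr_ge0.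
Qed.

Lemma add_sum_ord_le_sqr n : (n + \sum_(k < n) k <= n ^ 2)%N.
Proof.
elim: n => [|n IH]; first by rewrite big_ord0.
by rewrite big_ord_recr /=; move: IH; set S := (\sum_(k < n) k)%N; lia.
Qed.

Section pulls.
Context {K : nat} (p : nat -> 'I_K).

Lemma pullsS i t : pulls p i t.+1 = (pulls p i t + (p t == i))%N.
Proof. by rewrite /pulls -addn1 iotaD count_cat /= add0n addn0. Qed.

Lemma pulls_le i t : (pulls p i t <= t)%N.
Proof. by rewrite /pulls (leq_trans (count_size _ _)) // size_iota. Qed.

Lemma pullsD_le i j t : i != j -> (pulls p i t + pulls p j t <= t)%N.
Proof.
move=> ij; elim: t => [|t IH]; first by rewrite /pulls.
rewrite !pullsS; have [->|] := eqVneq (p t) i; last by case: (p t == j); lia.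
by rewrite (negbTE ij); lia.
Qed.

Lemma sum_pulls {R : pzSemiRingType} (f : 'I_K -> R) t :
  \sum_(s < t) f (p s) = \sum_i f i * (pulls p i t)%:R.
Proof.
elim: t => [|t IH]; first by rewrite big_ord0 big1 // => i _; rewrite mulr0.
under [RHS]eq_bigr do rewrite pullsS natrD mulrDr.
rewrite big_split /= -IH big_ord_recr /=; congr (_ + _).
rewrite (bigD1 (p t)) //= eqxx mulr1 big1 ?addr0 // => j.
by rewrite eq_sym => /negbTE ->; rewrite mulr0.
Qed.

End pulls.

Section ucb_pulls.
Context {R : realFieldType} {K T : nat} {p : nat -> 'I_K} {u : 'I_K -> nat -> R}.
Hypothesis p_argmax :
  forall {t}, (t < T)%N -> forall j, u j (pulls p j t) <= u (p t) (pulls p (p t) t).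
Context {i s : 'I_K} {m l : R} {bi bs : nat -> bool}.
Hypothesis neq_is : i != s.
Hypothesis ui_lt : forall n, l < n%:R -> ~~ bi n -> u i n < m.
Hypothesis us_ge : forall n, ~~ bs n -> m <= u s n.

Lemma pull_above_threshold_bad {t} : (t < T)%N -> p t = i -> l < (pulls p i t)%:R ->
  bi (pulls p i t) || bs (pulls p s t).
Proof.
move=> tT pti ln; apply/negPn/negP; rewrite negb_or.
move=> /andP[/(ui_lt _ ln) ui /us_ge us].
have := p_argmax tT s; rewrite pti => le_us_ui.
by have := lt_le_trans ui (le_trans us le_us_ui); rewrite ltxx.
Qed.

Lemma pulls_le_bad_counts_upto t : 0 <= l -> (t <= T)%N ->
  (pulls p i t)%:R <= l + 1 + \sum_(n < pulls p i t) (bi n)%:R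
                     + \sum_(t' < t) \sum_(n < t') (bs n)%:R.
Proof.
move=> l_ge0; elim: t => [_|t IH tT].
  by rewrite /pulls /= !big_ord0 mulr0n; lra.
have {IH} := IH (ltnW tT); set n := pulls p i t => IH.
have Sbs_ge0 : 0 <= \sum_(k < t) (bs k)%:R :> R by apply: sumr_ge0.
rewrite pullsS [\sum_(_ < t.+1) _]big_ord_recr /=.
have [pti|] := eqVneq (p t) i; last by rewrite addn0; lra.
rewrite addn1 big_ord_recr /= -/n -natr1.
have Sbi_ge0 : 0 <= \sum_(k < n) (bi k)%:R :> R by apply: sumr_ge0.
have SSbs_ge0 : 0 <= \sum_(t' < t) \sum_(k < t') (bs k)%:R :> R.
  by apply: sumr_ge0 => t' _; apply: sumr_ge0.
have := ler0n R (bi n); have [nl|ln] := leP (n%:R) l; first by lra.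
case/orP: (pull_above_threshold_bad tT pti ln) => [-> /=|bsn]; first by lra.
have ns_lt_t : (pulls p s t < t)%N.
  have n_gt0 : (0 < n)%N by rewrite -(ltr0n R); lra.
  by have := pullsD_le p i s t neq_is; rewrite -/n; lia.
have := ler_sum_ord_term (fun k => ler0n R (bs k)) ns_lt_t.
by rewrite bsn mulr1n; lra.
Qed.

Lemma pulls_le_bad_counts : 0 <= l ->
  (pulls p i T)%:R <= l + 1 + \sum_(n < T) (bi n)%:R
                     + \sum_(t < T) \sum_(n < t) (bs n)%:R.
Proof.
move=> l_ge0; apply: le_trans (pulls_le_bad_counts_upto T l_ge0 (leqnn T)) _.
by rewrite lerD2r lerD2l (ler_sum_ord_widen (fun n => ler0n R (bi n))) ?pulls_le.
Qed.

End ucb_pulls.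

Section real_expectation.
Context {d} {T : measurableType d} {R : realType} (P : probability T R).

Definition Rexpectation (X : T -> R) : R := fine ('E_P[X])%E.

Lemma RexpectationE X : X \in Lfun P 1 -> ('E_P[X] = (Rexpectation X)%:E)%E.
Proof. by move=> X1; rewrite fineK // expectation_fin_num. Qed.

Lemma Rexpectation_cst c : Rexpectation (cst c) = c.
Proof. by rewrite /Rexpectation expectation_cst. Qed.

Lemma Rexpectation_indic A : measurable A -> Rexpectation \1_A = fine (P A).
Proof. by move=> mA; rewrite /Rexpectation expectation_indic. Qed.

Lemma RexpectationD X Y : X \in Lfun P 1 -> Y \in Lfun P 1 ->
  Rexpectation (X \+ Y) = Rexpectation X + Rexpectation Y.
Proof.
by move=> X1 Y1; rewrite /Rexpectation expectationD // fineD // expectation_fin_num.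
Qed.

Lemma RexpectationZl k X : X \in Lfun P 1 ->
  Rexpectation (fun w => k * X w) = k * Rexpectation X.
Proof.
move=> X1; have -> : (fun w => k * X w) = k \o* X by apply/funext => w /=; rewrite mulrC.
by rewrite /Rexpectation expectationZl // fineM // expectation_fin_num.
Qed.

Lemma le_Rexpectation {X Y : T -> R} : X \in Lfun P 1 -> Y \in Lfun P 1 ->
  (forall w, X w <= Y w) -> Rexpectation X <= Rexpectation Y.
Proof.
move=> X1 Y1 XY; rewrite -lee_fin -!RexpectationE // unlock.
by apply: le_integral => // [||w _]; rewrite ?lee_fin ?XY //; exact/Lfun1_integrable.
Qed.

Lemma Lfun1_indic A : measurable A -> \1_A \in Lfun P 1.
Proof. by move=> mA; apply/Lfun1_integrable; exact: integrable_indic. Qed.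

Lemma Lfun1_sum I (s : seq I) (p : pred I) (F : I -> T -> R) :
  (forall i, F i \in Lfun P 1) -> (fun w => \sum_(i <- s | p i) F i w) \in Lfun P 1.
Proof. by move=> F1; rewrite -fct_sumE; apply: rpred_sum. Qed.

Lemma Rexpectation_sum I (s : seq I) (p : pred I) (F : I -> T -> R) :
  (forall i, F i \in Lfun P 1) ->
  Rexpectation (fun w => \sum_(i <- s | p i) F i w) =
  \sum_(i <- s | p i) Rexpectation (F i).
Proof.
move=> F1; elim: s => [|i s IH].
  by under eq_fun do rewrite big_nil; rewrite big_nil Rexpectation_cst.
under eq_fun do rewrite big_cons; rewrite big_cons -IH.
case: (p i); last by [].
by rewrite -RexpectationD //; exact: Lfun1_sum.
Qed.

Lemma Lfun1_comp_fintype {I : finType} {Y : T -> I} (f : I -> R) :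
  (forall i, measurable [set w | Y w = i]) -> (fun w => f (Y w)) \in Lfun P 1.
Proof.
move=> mY.
have -> : (fun w => f (Y w)) = fun w => \sum_i f i * \1_[set w | Y w = i] w.
  apply: funext => w; rewrite (bigD1 (Y w)) //= indicE mem_set // mulr1.
  rewrite big1 ?addr0 //.
  by move=> i /negbTE Yi; rewrite indicE memNset ?mulr0 // => /eqP; rewrite eq_sym Yi.
by apply: Lfun1_sum => i; apply: (rpredZ (f i)); exact: Lfun1_indic.
Qed.

Lemma Rexpectation_sum_indic_le {A : nat -> set T} {c : R} n :
  (forall k, measurable (A k)) -> (forall k, (P (A k) <= c%:E)%E) ->
  Rexpectation (fun w => \sum_(k < n) \1_(A k) w) <= n%:R * c.
Proof.
move=> mA PA; rewrite Rexpectation_sum => [|k]; last exact: Lfun1_indic.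
apply: (@le_trans _ _ (\sum_(k < n) c)); last by rewrite sumr_const card_ord mulr_natl.
apply: ler_sum => k _.
by rewrite Rexpectation_indic // -lee_fin fineK ?fin_num_measure.
Qed.

Lemma Rexpectation_le_union_bound {X : T -> R} {A B : nat -> set T}
    {l delta : R} {n : nat} :
  X \in Lfun P 1 -> (forall k, measurable (A k)) -> (forall k, measurable (B k)) ->
  (forall k, (P (A k) <= delta%:E)%E) -> (forall k, (P (B k) <= delta%:E)%E) ->
  n%:R ^+ 2 * delta <= 1 ->
  (forall w, X w <= l + 1 + \sum_(k < n) \1_(A k) w
                   + \sum_(t < n) \sum_(k < t) \1_(B k) w) ->
  Rexpectation X <= l + 2.
Proof.
move=> X1 mA mB PA PB n2_delta leX.
have delta_ge0 : 0 <= delta by rewrite -lee_fin (le_trans _ (PA 0%N)).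
have SA1 : (fun w => \sum_(k < n) \1_(A k) w) \in Lfun P 1.
  by apply: Lfun1_sum => k; exact: Lfun1_indic.
have SB1 : (fun w => \sum_(t < n) \sum_(k < t) \1_(B k) w) \in Lfun P 1.
  by apply: Lfun1_sum => t; apply: Lfun1_sum => k; exact: Lfun1_indic.
apply: (le_trans (le_Rexpectation X1 _ leX)).
  by rewrite !rpredD ?Lfun_cst.
rewrite !RexpectationD ?rpredD ?Lfun_cst // !Rexpectation_cst.
have EA := Rexpectation_sum_indic_le n mA PA.
have EB : Rexpectation (fun w => \sum_(t < n) \sum_(k < t) \1_(B k) w)
          <= (\sum_(t < n) t)%:R * delta.
  rewrite Rexpectation_sum => [|t]; last by apply: Lfun1_sum => k; exact: Lfun1_indic.
  rewrite natr_sum mulr_suml; apply: ler_sum => t _.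
  exact: Rexpectation_sum_indic_le.
have : (n + \sum_(t < n) t)%:R * delta <= n%:R ^+ 2 * delta.
  by rewrite ler_wpM2r // -natrX ler_nat add_sum_ord_le_sqr.
rewrite natrD mulrDl; lra.
Qed.

End real_expectation.

Section expected_regret.
Context {d} {Omega : measurableType d} {R : realType} (P : probability Omega R).
Context {K : nat} {pick : nat -> Omega -> 'I_K}.
Hypothesis mpick : forall t i, measurable [set w | pick t w = i].

Lemma Lfun1_pulls i t : (fun w => (pulls (pick ^~ w) i t)%:R : R) \in Lfun P 1.
Proof.
have -> : (fun w => (pulls (pick ^~ w) i t)%:R : R) =
          fun w => \sum_(s < t) ((pick s w == i)%:R : R).
  apply: funext => w; rewrite (sum_pulls (pick ^~ w) (fun j => (j == i)%:R)).
  rewrite (bigD1 i) //= eqxx mul1r big1 ?addr0 // => j /negbTE ->; exact: mul0r.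
apply: Lfun1_sum => s.
exact (Lfun1_comp_fintype P (fun j : 'I_K => ((j == i)%:R : R)) (mpick s)).
Qed.

Lemma Rexpectation_sum_pick (f : 'I_K -> R) T :
  Rexpectation P (fun w => \sum_(t < T) f (pick t w)) =
  \sum_i f i * Rexpectation P (fun w => (pulls (pick ^~ w) i T)%:R).
Proof.
under eq_fun => w do rewrite (sum_pulls (pick ^~ w)).
rewrite Rexpectation_sum => [|i]; last exact: (rpredZ (f i)) (Lfun1_pulls i T).
by apply: eq_bigr => i _; rewrite RexpectationZl // Lfun1_pulls.
Qed.

Lemma expected_regretE (mu : 'I_K -> R) (m : R) T :
  ((T%:R * m)%:E - \sum_(t < T) 'E_P[fun w => mu (pick t w)])%E =
  (\sum_i (m - mu i) * Rexpectation P (fun w => (pulls (pick ^~ w) i T)%:R))%:E.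
Proof.
under eq_bigr do rewrite RexpectationE ?(Lfun1_comp_fintype P mu) //.
rewrite sumEFin -Rexpectation_sum => [|t]; last first.
  exact (Lfun1_comp_fintype P mu (mpick t)).
rewrite Rexpectation_sum_pick -EFinB; congr EFin.
have -> : T%:R = \sum_i Rexpectation P (fun w => (pulls (pick ^~ w) i T)%:R).
  have := Rexpectation_sum_pick (fun=> 1) T.
  under eq_fun do rewrite sumr_const card_ord; rewrite Rexpectation_cst => ->.
  by under eq_bigr do rewrite mul1r.
by rewrite mulr_suml -sumrB; apply: eq_bigr => i _; rewrite mulrBl mulrC.
Qed.

End expected_regret.

Section ucb_index.
Variable R : realType.
Implicit Types mu x G : R.

Lemma aux_f_gap_dist mu x G :
  aux_f mu x - aux_f mu mu <= G -> `|x - mu| <= Num.sqrt (2 * G).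
Proof.
rewrite /aux_f subrr expr0n /= mulr0 subr0 => gapG.
by rewrite -sqrtr_sqr ler_wsqrtr //; lra.
Qed.

Lemma mean_le_ucb mu x G :
  aux_f mu x - aux_f mu mu <= G -> mu <= x + Num.sqrt (2 * G).
Proof. by move=> /aux_f_gap_dist; rewrite ler_distlC => /andP[]. Qed.

Lemma ucb_lt_mean mu mu' x G : mu < mu' -> G < (mu' - mu) ^+ 2 / 8 ->
  aux_f mu x - aux_f mu mu <= G -> x + Num.sqrt (2 * G) < mu'.
Proof.
move=> lt_mu Gsmall /aux_f_gap_dist; rewrite ler_distlC => /andP[x_le _].
have : Num.sqrt (2 * G) < (mu' - mu) / 2.
  rewrite -[X in _ < X]gtr0_norm ?divr_gt0 ?subr_gt0 // -sqrtr_sqr ltr_sqrt.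
    by rewrite expr_div_n; lra.
  by rewrite exprn_gt0 // divr_gt0 ?subr_gt0.
lra.
Qed.

End ucb_index.

Lemma measurable_aux_f_gap_le d (T : measurableType d) (R : realType)
    (Y : T -> R) (mu c : R) :
  measurable_fun setT Y -> measurable [set w | aux_f mu (Y w) - aux_f mu mu <= c].
Proof.
move=> mY; rewrite -[X in measurable X]setTI; apply: measurable_fun_le => //.
apply: measurable_funB => //; apply: measurable_funM => //.
by apply: measurable_funX; apply: measurable_funB.
Qed.

Lemma probability_setC_le d (T : measurableType d) (R : realType)
    (P : probability T R) (A : set T) (e : R) :
  measurable A -> ((1 - e)%:E <= P A)%E -> (P (~` A) <= e%:E)%E.
Proof.
move=> mA; rewrite probability_setC // -(fineK (fin_num_measure P _ mA)).
by rewrite -EFinB !lee_fin; lra.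
Qed.

Theorem theorem2 (R : realType) (d : measure_display) (Omega : measurableType d)
  (P : probability Omega R) (K : nat)
  (D : 'I_K -> probability R R) (mu : 'I_K -> R) (istar : 'I_K)
  (X : 'I_K -> nat -> Omega -> R)
  (A : seq (R * R) -> R) (x0 : R) (g ginv : R -> R -> R)
  (T : nat) (pick : nat -> Omega -> 'I_K) :
  (* rewards: X i j = reward of the (j+1)-th pull of arm i, i.i.d. ~ D i *)
  (forall i j, measurable_fun setT (X i j)) ->
  (forall i j B, measurable B -> P (X i j @^-1` B) = D i B) ->
  mutually_independent P (fun ij : 'I_K * nat => X ij.1 ij.2) ->
  (* mu i is the mean of D i; istar is an optimal arm *)
  (forall i, (D i).-integrable setT (fun x => x%:E) /\
             (\int[D i]_x x%:E = (mu i)%:E)%E) ->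
  (forall i, mu i <= mu istar) ->
  (* A is a g(k,delta)-bounded first-order algorithm on each f_i *)
  (forall i k, measurable_fun setT (fun w => fo_iter A x0 (fun j => X i j w) k)) ->
  (forall i, fo_bounded P A x0 (X i) (aux_f (mu i)) (mu i) g) ->
  (0 < T)%N ->
  let delta := (T%:R ^+ 2)^-1 : R in
  let Delta := fun i => mu istar - mu i in
  (* g(., delta) is decreasing and ginv(., delta) is its inverse *)
  (forall a b : R, 0 <= a -> a < b -> g b delta < g a delta) ->
  (forall i, 0 < Delta i ->
     0 <= ginv (Delta i ^+ 2 / 8) delta /\
     g (ginv (Delta i ^+ 2 / 8) delta) delta = Delta i ^+ 2 / 8) ->
  (* FO-UCB: in round t (t = 0..T-1) an arm of largest index is played *)
  (forall t i, measurable [set w | pick t w = i]) ->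
  (forall t, (t < T)%N -> forall w j,
     ucb_index A x0 g delta (fun n => X j n w) (pulls (pick ^~ w) j t) <=
     ucb_index A x0 g delta (fun n => X (pick t w) n w)
               (pulls (pick ^~ w) (pick t w) t)) ->
  ((T%:R * mu istar)%:E - \sum_(t < T) 'E_P[fun w => mu (pick t w)] <=
   (\sum_(i | 0 < Delta i) Delta i * (ginv (Delta i ^+ 2 / 8) delta + 2))%:E)%E.
Proof.
(* The reward model only serves to establish [fo_bounded]; the regret bound
   needs nothing else about it. *)
move=> _ _ _ _ mu_le mx bounded T_gt0 delta Delta g_decr ginvP mpick ucb_argmax.
pose good i n := [set w | aux_f (mu i) (fo_iter A x0 (fun j => X i j w) n)
                          - aux_f (mu i) (mu i) <= g n%:R delta].
have mgood i n : measurable (good i n) by exact: measurable_aux_f_gap_le (mx i n).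
have Pbad i n : (P (~` good i n) <= delta%:E)%E.
  apply: probability_setC_le => //; apply: bounded.
  by rewrite invr_gt0 exprn_gt0 ?ltr0n.
rewrite (expected_regretE P mpick) lee_fin (bigID (fun i => 0 < Delta i)) /=.
rewrite [X in _ + X]big1 ?addr0 => [|i]; last first.
  rewrite -leNgt /Delta => Di; rewrite (_ : mu istar - mu i = 0) ?mul0r //.
  by have := mu_le i; lra.
apply: ler_sum => i Di; apply: ler_wpM2l; first exact: ltW.
have [l_ge0 g_l] := ginvP i Di.
apply: (Rexpectation_le_union_bound P (n := T) (Lfun1_pulls P mpick i T)
          _ _ (Pbad i) (Pbad istar)).
1,2: by move=> n; apply: measurableC.
- by rewrite /delta mulfV // expf_neq0 // pnatr_eq0 -lt0n.
move=> w; apply: (pulls_le_bad_counts (s := istar) (m := mu istar)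
    (u := fun j => ucb_index A x0 g delta (fun n => X j n w))
    (bi := fun n => w \in ~` good i n) (bs := fun n => w \in ~` good istar n)
    (fun t tT j => ucb_argmax t tT w j)) => //.
- by apply: contraTneq Di => ->; rewrite /Delta subrr ltxx.
- move=> n ln; rewrite in_setC negbK => /set_mem good_n.
  apply: ucb_lt_mean good_n; first by rewrite -subr_gt0.
  by rewrite -g_l; exact: g_decr.
- by move=> n; rewrite in_setC negbK => /set_mem; exact: mean_le_ucb.
Qed.
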